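(* Let $G$ be a finite simple $d$-regular graph on $n\ge 3$ vertices that contains at least one Hamiltonian cycle. Choose edges of $G$ one at a time in a uniformly random order (without repetition), stopping as soon as every vertex has degree at least two; call the resulting random graph $G_\omega$. Then $$\mathbb{E}\left(\frac{\#\{\text{Hamiltonian cycles of } G \text{ contained in } G_\omega\}}{\#\{\text{Hamiltonian cycles of } G\}}\right) = \frac{2}{\binom{n+d-2}{n}} - \frac{1}{\binom{n+2d-4}{n}}.$$
   Context: Precisely: a uniformly random ordering $(e_1,\dots,e_m)$ of the $m$ edges of $G$ is chosen, $k$ is the least index such that the graph on $V(G)$ with edges $e_1,\dots,e_k$ has minimum degree at least $2$, and $G_\omega$ is that graph. Hamiltonian cycles are counted as subgraphs (edge sets). *)

From mathcomp Require Import all_boot all_order all_fingroup all_algebra.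
Set Implicit Arguments. Unset Strict Implicit. Unset Printing Implicit Defensive.
Import GRing.Theory Num.Theory.

(* A simple graph on the finite vertex type T is a symmetric irreflexive
   relation e; edges are represented as 2-element vertex sets. *)
Section Graph.
Variables (T : finType) (e : rel T).

Definition edges : {set {set T}} :=
  [set f : {set T} | [exists x, exists y, e x y && (f == [set x; y])]].

Definition deg_in (F : seq {set T}) (v : T) : nat :=
  #|[set f : {set T} | (f \in F) && (v \in f)]|.

Definition mindeg2 (F : seq {set T}) : bool := [forall v : T, 2 <= deg_in F v].

Definition ham_cycle_along (c : seq T) (H : {set {set T}}) : bool :=
  path.cycle e c && (H == [set [set x; next c x] | x : T]).

Definition ham_cycle (H : {set {set T}}) : bool :=
  [exists p : {perm T}, ham_cycle_along [seq p x | x <- enum T] H].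

Definition ham_cycles : {set {set {set T}}} := [set H | ham_cycle H].

Definition stop_index (s : seq {set T}) : nat :=
  find (fun k => mindeg2 (take k s)) (iota 0 (size s).+1).

Definition G_omega (s : seq {set T}) : {set {set T}} :=
  [set f | f \in take (stop_index s) s].

Definition edge_orderings : seq (seq {set T}) := permutations (enum edges).

Definition ham_fraction (s : seq {set T}) : rat :=
  (#|[set H in ham_cycles | H \subset G_omega s]|%:R / #|ham_cycles|%:R)%R.

Definition expected_ham_fraction : rat :=
  ((\sum_(s <- edge_orderings) ham_fraction s) / (size edge_orderings)%:R)%R.

End Graph.

(** Fix a Hamiltonian cycle H (it has n = #|T| edges) and an edge ordering, and let g0
    be the edge of H that comes last in it.  H lies in G_omega iff the process has not
    stopped before g0 arrives.  At that moment every vertex outside g0 already has its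
    two H-edges, so this happens iff some endpoint v of g0 receives g0 before all the
    d - 2 chords at v (edges at v outside H).  For g in H and a set B of edges disjoint
    from H only the relative order of H :|: B matters, so the probability that g comes
    last in H and before all of B is (n - 1)! #|B|! / (n + #|B|)! = 1 / (n 'C(n + #|B|, n)).
    Inclusion-exclusion over the two endpoints of g0, whose chord sets are disjoint,
    gives P(H in G_omega) = 2 / 'C(n + d - 2, n) - 1 / 'C(n + 2d - 4, n) for every H. *)

From mathcomp Require Import all_boot all_order all_fingroup all_algebra.
From mathcomp Require Import zify ring.
Set Implicit Arguments. Unset Strict Implicit. Unset Printing Implicit Defensive.
Import GRing.Theory Num.Theory.

Section SeqIndex.
Variable X : eqType.
Implicit Types (s c : seq X) (x y : X).

Lemma ltn_index_filter (a : pred X) s x y : x \in s -> y \in s -> a x -> a y ->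
  (index x (filter a s) < index y (filter a s)) = (index x s < index y s).
Proof.
elim: s => [//|z s IHs]; rewrite !inE => xs ys ax ay /=.
have [?|zx] := eqVneq z x; first subst z.
  have [?|xy] := eqVneq x y; first by subst y; rewrite ltnn.
  by rewrite ax /= eqxx (negbTE xy).
have [?|zy] := eqVneq z y; first by subst z; rewrite ay /= eqxx (negbTE zx).
move: xs ys; rewrite ![_ == z]eq_sym (negbTE zx) (negbTE zy) /= => xs ys.
by case: (a z) => /=; rewrite ?(negbTE zx) ?(negbTE zy) ?ltnS; apply: IHs.
Qed.

Lemma in_drop s x i : uniq s -> x \in s -> (x \in drop i s) = (i <= index x s).
Proof.
move=> us xs; have := us; rewrite -[s in uniq s](cat_take_drop i) cat_uniq.
case/and3P=> _ /hasPn tds _; have := xs; rewrite -[s in x \in s](cat_take_drop i) mem_cat.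
rewrite in_take //; have [lt _|ge /= ->//] := ltnP (index x s) i.
by apply/negP => /tds; rewrite in_take // lt.
Qed.

Lemma index_next c x : uniq c -> x \in c -> index (next c x) c = (index x c).+1 %% size c.
Proof.
move=> uc xc; rewrite next_nth xc.
case: c uc xc => [//|y c'] uc xc.
have [lt|ge] := ltnP (index x (y :: c')) (size c').
  by rewrite -[nth y c' _]/(nth y (y :: c') _.+1) index_uniq //= ?ltnS // modn_small.
have -> : index x (y :: c') = size c'.
  by apply/eqP; rewrite eqn_leq ge andbT -ltnS; rewrite -index_mem in xc.
by rewrite nth_default //= eqxx modnn.
Qed.

Lemma next_next_neq c x : uniq c -> x \in c -> 3 <= size c -> next c (next c x) != x.
Proof.
move=> uc xc c3; apply/eqP => /(congr1 (index^~ c)).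
rewrite !index_next ?mem_next //; have := index_mem x c; rewrite xc.
move: (index x c) (size c) c3 => i n c3 lt.
have [l1|g1] := ltnP i.+1 n; last first.
  have -> : i.+1 = n by lia.
  by rewrite modnn modn_small; lia.
rewrite (modn_small l1); have [l2|g2] := ltnP i.+2 n; first by rewrite modn_small //; lia.
have -> : i.+2 = n by lia.
by rewrite modnn; lia.
Qed.

End SeqIndex.

Lemma ltn_find_iota (P : pred nat) m L : {homo P : i j / i <= j >-> (i ==> j)} ->
  P m -> m < L -> forall j, (j < find P (iota 0 L)) = ~~ P j.
Proof.
move=> Pmono Pm mL j.
have hasP : has P (iota 0 L) by apply/hasP; exists m; rewrite ?mem_iota.
have kL : find P (iota 0 L) < L by rewrite -[L in _ < L](size_iota 0) -has_find.
have [jk|kj] := ltnP j (find P (iota 0 L)).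
  by have := before_find 0 jk; rewrite nth_iota ?(ltn_trans jk) // => ->.
by have := nth_find 0 hasP; rewrite nth_iota // => /(implyP (Pmono _ _ kj)) ->.
Qed.

Lemma count_sum (A : Type) (a : pred A) (l : seq A) : count a l = \sum_(x <- l) a x.
Proof. by elim: l => [|x l IHl]; rewrite ?big_nil ?big_cons //= IHl. Qed.

Lemma sum_card_in_count (I : finType) (J : Type) (A : {pred I}) (P : I -> pred J) (l : seq J) :
  \sum_(x <- l) #|[set i in A | P i x]| = \sum_(i in A) count (P i) l.
Proof.
under [RHS]eq_bigr do rewrite count_sum.
rewrite exchange_big; apply: eq_bigr => x _.
rewrite -sum1_card (eq_bigl (fun i => (i \in A) && P i x)) => [|i]; last by rewrite inE.
by rewrite big_mkcondr; apply: eq_bigr => i _; case: (P i x).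
Qed.

Lemma count_fibers (A B : eqType) (f : A -> B) (P : pred B) (l : seq A) (l' : seq B) :
  uniq l' -> {in l, forall x, f x \in l'} ->
  count (fun x => P (f x)) l = \sum_(y <- l' | P y) count (fun x => f x == y) l.
Proof.
move=> ul'; elim: l => [|x l IHl] fl' /=; first by rewrite big1.
rewrite IHl => [|z zl]; last by rewrite fl' // inE zl orbT.
have fx : f x \in l' by rewrite fl' // inE eqxx.
rewrite big_split /=; congr (_ + _).
rewrite big_mkcond (bigD1_seq (f x)) //= eqxx big1 ?addn0; first by case: (P (f x)).
by move=> y; rewrite eq_sym => /negbTE->; case: (P y).
Qed.

Lemma fact_addn_binomial h b : 0 < h -> (h + b)`! = h * 'C(h + b, h) * ((h - 1)`! * b`!).
Proof.
case: h => // h _; rewrite -(bin_fact (leq_addr b h.+1)) addKn factS subSS subn0; ring.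
Qed.

Section Orderings.
Variable X : finType.
Implicit Types (E s t : seq X) (H B : {set X}).

Lemma perm_eq_relabel t t' : uniq t -> perm_eq t t' ->
  exists2 sg : {perm X}, map sg t = t' & forall A : {pred X},
    {subset t <= A} -> forall x, (sg x \in A) = (x \in A).
Proof.
move=> ut ptt'; have ut' : uniq t' by rewrite -(perm_uniq ptt').
have sz : size t = size t' by apply: perm_size.
pose f x := if x \in t then nth x t' (index x t) else x.
have ft x : x \in t -> f x \in t.
  by move=> xt; rewrite /f xt (perm_mem ptt') mem_nth // -sz index_mem.
have f_inj : injective f.
  move=> x y; rewrite /f; case xt: (x \in t); case yt: (y \in t) => //.
  - rewrite (set_nth_default y) -?sz ?index_mem //.
    by move/eqP; rewrite nth_uniq -?sz ?index_mem // => /eqP; apply: index_inj.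
  - by move=> fxy; have := ft x xt; rewrite /f xt fxy yt.
  - by move=> fxy; have := ft y yt; rewrite /f yt -fxy xt.
exists (perm f_inj).
  case Et: t => [|a l]; first by move: sz; rewrite Et => /esym/size0nil.
  rewrite -Et; apply: (@eq_from_nth _ a); first by rewrite size_map.
  move=> i; rewrite size_map => lti.
  by rewrite (nth_map a) // permE /f mem_nth // index_uniq // (set_nth_default a) -?sz.
move=> A tA x; rewrite permE /f; case: ifP => // xt.
by rewrite !tA // (perm_mem ptt') mem_nth // -sz index_mem.
Qed.

Lemma mem_permutations_map E (sg : {perm X}) s : uniq E ->
  (forall x, (sg x \in E) = (x \in E)) ->
  (map sg s \in permutations E) = (s \in permutations E).
Proof.
move=> uE sgE; rewrite !mem_permutations.
apply/idP/idP => pE; apply: uniq_perm => //.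
- by rewrite -(map_inj_uniq (@perm_inj _ sg)) (perm_uniq pE).
- by move=> x; rewrite -sgE -(perm_mem pE) mem_map //; apply: perm_inj.
- by rewrite (map_inj_uniq (@perm_inj _ sg)) (perm_uniq pE).
move=> y; rewrite -[y](permKV sg) mem_map; last exact: perm_inj.
by rewrite (perm_mem pE) sgE.
Qed.

Lemma count_permutations_map E (sg : {perm X}) (Q : pred (seq X)) : uniq E ->
  (forall x, (sg x \in E) = (x \in E)) ->
  count (fun s => Q (map sg s)) (permutations E) = count Q (permutations E).
Proof.
move=> uE sgE; rewrite -(count_map (map sg)); apply/seq.permP.
apply: uniq_perm; rewrite ?permutations_uniq //.
  by rewrite (map_inj_uniq (inj_map (@perm_inj _ sg))) permutations_uniq.
move=> s; have -> : s = map sg (map (sg^-1)%g s).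
  by rewrite -map_comp (eq_map (permKV sg)) map_id.
by rewrite (mem_map (inj_map (@perm_inj _ sg))) (mem_permutations_map _ uE sgE).
Qed.

Lemma count_filter_permutations E (S : pred X) (P : pred (seq X)) : uniq E ->
  count (fun s => P (filter S s)) (permutations E) * (size (filter S E))`! =
  (size E)`! * count P (permutations (filter S E)).
Proof.
move=> uE; set F := filter S E.
pose fiber t := count (fun s => filter S s == t) (permutations E).
have filter_perm : {in permutations E, forall s, filter S s \in permutations F}.
  by move=> s; rewrite !mem_permutations; apply: perm_filter.
have fiber_const : {in permutations F, forall t, fiber t = fiber F}.
  move=> t; rewrite mem_permutations => tF.
  have [sg tF' sg_fix] := perm_eq_relabel (etrans (perm_uniq tF) (filter_uniq S uE)) tF.
  have tE : {subset t <= E} by move=> x; rewrite (perm_mem tF) mem_filter => /andP[].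
  have tS : {subset t <= S} by move=> x; rewrite (perm_mem tF) mem_filter => /andP[].
  (* sg stabilizes E and S and maps t to F, so it carries the fiber over t onto the one over F. *)
  rewrite /fiber -[RHS](count_permutations_map _ uE (sg_fix _ tE)).
  apply: eq_count => s /=.
  rewrite filter_map (eq_filter (a2 := S)) => [|x]; last exact: sg_fix tS x.
  by rewrite -tF' (inj_eq (inj_map (@perm_inj _ sg))).
have count_fiber (Q : pred (seq X)) :
    count (fun s => Q (filter S s)) (permutations E) = count Q (permutations F) * fiber F.
  rewrite (count_fibers _ (permutations_uniq F) filter_perm) big_seq_cond.
  rewrite (eq_bigr (fun=> fiber F)) => [|t /andP[tF _]]; last exact: fiber_const.
  by rewrite -big_seq_cond big_const_seq iter_addn_0 mulnC.
have := count_fiber predT; rewrite !count_predT !size_permutations ?filter_uniq // => ->.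
by rewrite count_fiber; ring.
Qed.

Definition last_of H g s := [forall h in H, (h != g) ==> (index h s < index g s)].
Definition precedes g B s := [forall f in B, index g s < index f s].

Section LastPrecedes.
Variables (H B : {set X}) (g : X) (t0 : seq X).
Hypotheses (dHB : [disjoint H & B]) (gH : g \in H).
Hypotheses (ut0 : uniq t0) (t0E : t0 =i H :|: B).

Let notHB x : x \in H -> x \in B -> False.
Proof. by move=> xH xB; move: (disjointFr dHB xH); rewrite xB. Qed.

Lemma last_precedes_cat x y : perm_eq x (enum (H :\ g)) -> perm_eq y (enum B) ->
  last_of H g (x ++ g :: y) && precedes g B (x ++ g :: y).
Proof.
move=> /perm_mem xE /perm_mem yE.
have gx : g \notin x by rewrite xE mem_enum !inE eqxx.
apply/andP; split; apply/forall_inP => h hH.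
  apply/implyP => hg; have hx : h \in x by rewrite xE mem_enum !inE hg.
  by rewrite !index_cat hx (negbTE gx) /= eqxx addn0 index_mem.
have hx : h \notin x by rewrite xE mem_enum !inE; apply/andP => -[_ /notHB]; apply.
have gh : g != h by apply: contraTneq hH => <-; apply/negP/notHB.
by rewrite !index_cat (negbTE hx) (negbTE gx) /= eqxx (negbTE gh) addn0 addnS ltnS leq_addr.
Qed.

Lemma perm_cat_last_precedes x y : perm_eq x (enum (H :\ g)) -> perm_eq y (enum B) ->
  perm_eq (x ++ g :: y) t0.
Proof.
move=> xE yE; have /perm_mem xE' := xE; have /perm_mem yE' := yE.
have gx : g \notin x by rewrite xE' mem_enum !inE eqxx.
have gy : g \notin y by rewrite yE' mem_enum; apply/negP/notHB.
apply: uniq_perm => //.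
  rewrite cat_uniq /= (perm_uniq xE) (perm_uniq yE) !enum_uniq (negbTE gx) gy /= andbT.
  by apply/hasPn => z; rewrite xE' yE' !mem_enum !inE => zB; apply/andP => -[_ /notHB]; apply.
move=> z; rewrite t0E mem_cat inE xE' yE' !mem_enum !inE.
by case: (eqVneq z g) => [->|]; rewrite ?gH //= orbF.
Qed.

Lemma last_precedes_split t : perm_eq t t0 -> last_of H g t && precedes g B t ->
  perm_eq (take (index g t) t) (enum (H :\ g)) /\
  perm_eq (drop (index g t).+1 t) (enum B).
Proof.
move=> tt0 /andP[/forall_inP lastg /forall_inP precg].
have ut : uniq t by rewrite (perm_uniq tt0).
have memt z : (z \in t) = (z \in H :|: B) by rewrite (perm_mem tt0) t0E.
split; apply: uniq_perm; rewrite ?take_uniq ?drop_uniq ?enum_uniq // => z; rewrite mem_enum.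
  case zt: (z \in t); last first.
    rewrite (contraFF (@mem_take _ _ _ _) zt); apply/esym/negP => /setD1P[_ zH].
    by move: zt; rewrite memt inE zH.
  rewrite in_take //; apply/idP/setD1P => [lt|[zg zH]]; last by have := lastg z zH; rewrite zg.
  split; first by apply: contraTneq lt => ->; rewrite ltnn.
  move: zt; rewrite memt inE => /orP[//|zB].
  by have := precg z zB; rewrite ltnNge => /negP; rewrite ltnW.
case zt: (z \in t); last first.
  rewrite (contraFF (@mem_drop _ _ _ _) zt); apply/esym/negP => zB.
  by move: zt; rewrite memt inE zB orbT.
rewrite in_drop //; apply/idP/idP => [lt|zB]; last exact: precg.
move: zt; rewrite memt inE => /orP[zH|//].
have [zg|zg] := eqVneq z g; first by move: lt; rewrite zg ltnn.
by have := lastg z zH; rewrite zg /= ltnNge ltnW.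
Qed.

Lemma count_last_precedes_exact :
  count (fun t => last_of H g t && precedes g B t) (permutations t0) =
  (#|H| - 1)`! * #|B|`!.
Proof.
set L := [seq x ++ g :: y | x <- permutations (enum (H :\ g)), y <- permutations (enum B)].
have uL : uniq L.
  apply: allpairs_uniq; rewrite ?permutations_uniq // => -[x y] [x' y'].
  move=> /allpairsP[[a b] [/= + _ [-> ->]]] /allpairsP[[a' b'] [/= + _ [-> ->]]].
  rewrite !mem_permutations => /perm_size sa /perm_size sa' /= /eqP.
  by rewrite eqseq_cat ?sa ?sa' // => /andP[/eqP-> /eqP[->]].
rewrite -size_filter (@perm_size _ _ L); last first.
  apply: uniq_perm; rewrite ?filter_uniq ?permutations_uniq // => t.
  rewrite mem_filter mem_permutations; apply/andP/allpairsP => [[lpt tt0]|[[x y] [/=]]].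
    have [xE yE] := last_precedes_split tt0 lpt.
    have gt : g \in t by rewrite (perm_mem tt0) t0E inE gH.
    exists (take (index g t) t, drop (index g t).+1 t); rewrite !mem_permutations /=.
    split=> //; rewrite -[t in t = _](cat_take_drop (index g t)).
    by rewrite [drop (index g t) t](drop_nth g) ?index_mem ?nth_index.
  rewrite !mem_permutations => xE yE ->.
  by rewrite last_precedes_cat ?perm_cat_last_precedes.
rewrite size_allpairs !size_permutations ?enum_uniq // -!cardE.
by rewrite (cardsD1 g H) gH add1n subSS subn0.
Qed.

End LastPrecedes.

Lemma last_precedes_filter H B g s : g \in H -> {subset H :|: B <= s} ->
  let s' := filter (mem (H :|: B)) s in
  last_of H g s' && precedes g B s' = last_of H g s && precedes g B s.
Proof.
move=> gH HBs /=; have idx x y : x \in H :|: B -> y \in H :|: B ->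
    (index x (filter (mem (H :|: B)) s) < index y (filter (mem (H :|: B)) s)) =
    (index x s < index y s).
  by move=> xHB yHB; rewrite ltn_index_filter ?HBs.
by congr (_ && _); apply: eq_forallb_in => x xHB; rewrite idx // !inE ?gH ?xHB ?orbT.
Qed.

Lemma count_last_precedes E H B g : uniq E -> {subset H :|: B <= E} ->
  [disjoint H & B] -> g \in H ->
  count (fun s => last_of H g s && precedes g B s) (permutations E) *
    (#|H| * 'C(#|H| + #|B|, #|H|)) = (size E)`!.
Proof.
move=> uE HBE dHB gH; set S := mem (H :|: B).
rewrite -(@eq_in_count _ (fun s => last_of H g (filter S s) && precedes g B (filter S s)))
  => [|s]; last first.
  by rewrite mem_permutations => /perm_mem sE; apply: last_precedes_filter => // x /HBE; rewrite sE.
have FE : filter S E =i H :|: B.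
  by move=> x; rewrite mem_filter; apply/andP/idP => [[]//|xHB]; rewrite HBE.
have szF : size (filter S E) = #|H| + #|B|.
  rewrite -(card_uniqP (filter_uniq S uE)) (eq_card FE).
  by rewrite cardsU (disjoint_setI0 dHB) cards0 subn0.
have H_gt0 : 0 < #|H| by apply/card_gt0P; exists g.
have := count_filter_permutations S (fun t => last_of H g t && precedes g B t) uE.
rewrite count_last_precedes_exact ?filter_uniq // szF fact_addn_binomial // mulnA => count_eq.
apply/eqP; rewrite -(eqn_pmul2r (_ : 0 < (#|H| - 1)`! * #|B|`!)) ?muln_gt0 ?fact_gt0 //.
by rewrite count_eq.
Qed.

Lemma precedes_bigcup (I : finType) g (A : {pred I}) (F : I -> {set X}) s :
  precedes g (\bigcup_(i in A) F i) s = [forall i in A, precedes g (F i) s].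
Proof.
apply/forall_inP/forall_inP => [prec i iA | prec f /bigcupP[i iA fi]].
  by apply/forall_inP => f fi; apply: prec; apply/bigcupP; exists i.
by move/forall_inP: (prec i iA); apply.
Qed.

End Orderings.

Section Graph.
Variables (T : finType) (e : rel T).
Variable d : nat.
Hypotheses (e_irr : irreflexive e) (e_sym : symmetric e).
Hypothesis e_reg : forall v, #|[set w | e v w]| = d.

Definition edges_at (F : {set {set T}}) v := [set f in F | v \in f].

Lemma edgesP f : reflect (exists x y, e x y /\ f = [set x; y]) (f \in edges e).
Proof.
rewrite inE; apply: (iffP existsP) => [[x /existsP[y /andP[exy /eqP->]]]|[x [y [exy ->]]]].
  by exists x, y.
by exists x; apply/existsP; exists y; rewrite exy eqxx.
Qed.

Lemma edge_neq x y : e x y -> x != y.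
Proof. by apply: contraTneq => ->; rewrite e_irr. Qed.

Lemma edge_set2 f : f \in edges e -> exists a b, a != b /\ f = [set a; b].
Proof. by case/edgesP=> x [y [exy ->]]; exists x, y; rewrite edge_neq. Qed.

Lemma edge_setE f a b : f \in edges e -> a \in f -> b \in f -> a != b -> f = [set a; b].
Proof.
case/edgesP=> x [y [_ ->]] /set2P[]-> /set2P[]->; rewrite ?eqxx // => _.
by rewrite setUC.
Qed.

Lemma card_edges_at v : #|edges_at (edges e) v| = d.
Proof.
rewrite -(e_reg v) -(card_in_imset (f := fun w => [set v; w])); last first.
  move=> w w'; rewrite !inE => evw _ /setP /(_ w); rewrite !inE eqxx orbT.
  by case/esym/orP=> /eqP // wv; move: evw; rewrite wv e_irr.
apply: eq_card => f; rewrite [f \in edges_at _ _]inE; apply/andP/imsetP => [[fE]|[w]].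
  case/edgesP: fE => x [y [exy ->]] /set2P[]->; first by exists y; rewrite ?inE.
  by exists x; rewrite ?inE 1?e_sym // setUC.
by rewrite inE => evw ->; split; [apply/edgesP; exists v, w | rewrite set21].
Qed.

Definition cycle_edges (c : seq T) := [set [set x; next c x] | x : T].

Section CycleEdges.
Variable c : seq T.
Hypotheses (ec : path.cycle e c) (uc : uniq c) (c_all : forall x, x \in c) (c3 : 3 <= size c).

Lemma cycle_edges_sub : {subset cycle_edges c <= edges e}.
Proof.
by move=> f /imsetP[x _ ->]; apply/edgesP; exists x, (next c x); rewrite (next_cycle ec).
Qed.

Lemma card_cycle_edges_at v : #|edges_at (cycle_edges c) v| = 2.
Proof.
have [pn np] := (prev_next uc, next_prev uc).
have -> : edges_at (cycle_edges c) v = [set [set v; next c v]; [set prev c v; v]].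
  apply/setP => f; rewrite !inE; apply/andP/orP => [[/imsetP[x _ ->]]|].
    by case/set2P=> ->; [left | right; rewrite pn].
  case=> /eqP->; rewrite ?set21 ?set22; split=> //; apply/imsetP.
    by exists v.
  by exists (prev c v); rewrite ?np.
rewrite cards2; suff -> : [set v; next c v] != [set prev c v; v] by [].
apply/negP => /eqP eq_v.
have : next c v \in [set prev c v; v] by rewrite -eq_v set22.
case/set2P => [nv_pv|].
  by move: (next_next_neq uc (c_all v) c3); rewrite {1}nv_pv np eqxx.
by move=> nv_v; move: (next_cycle ec (c_all v)); rewrite nv_v e_irr.
Qed.

Lemma card_cycle_edges : #|cycle_edges c| = #|T|.
Proof.
rewrite card_imset // => x y eq_xy.
have : x \in [set y; next c y] by rewrite -eq_xy set21.
case/set2P => // x_ny.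
have : next c x \in [set y; next c y] by rewrite -eq_xy set22.
case/set2P => [nx_y|]; last exact: (can_inj (prev_next uc)).
by move: (next_next_neq uc (c_all y) c3); rewrite -x_ny nx_y eqxx.
Qed.

End CycleEdges.

Lemma ham_cycle_2regular H : 3 <= #|T| -> ham_cycle e H ->
  [/\ {subset H <= edges e}, forall v, #|edges_at H v| = 2 & #|H| = #|T|].
Proof.
move=> T3 /existsP[p /andP[ec /eqP->]]; set c := [seq p x | x <- enum T] in ec *.
have uc : uniq c by rewrite map_inj_uniq ?enum_uniq //; apply: perm_inj.
have c_all x : x \in c by rewrite -[x](permKV p) mem_map ?mem_enum //; apply: perm_inj.
have c3 : 3 <= size c by rewrite size_map -cardT.
split; [exact: cycle_edges_sub | exact: card_cycle_edges_at | exact: card_cycle_edges].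
Qed.

Lemma mem_edge_orderings s : s \in edge_orderings e -> s =i edges e.
Proof. by rewrite mem_permutations => /perm_mem sE f; rewrite sE mem_enum. Qed.

Section LastEdge.
Variable H : {set {set T}}.
Hypotheses (Hsub : {subset H <= edges e}) (Hdeg : forall v, #|edges_at H v| = 2).

Definition chords_at v := edges_at (edges e) v :\: H.
Definition chords_near (g : {set T}) := \bigcup_(v in g) chords_at v.

Section Ordering.
Variable s : seq {set T}.
Hypothesis sE : s \in edge_orderings e.
Let s_edges := mem_edge_orderings sE.

Lemma last_of_exists : H != set0 -> exists2 g, g \in H & last_of H g s.
Proof.
case/set0Pn => g0 g0H.
have [g gH g_max] := @arg_maxnP _ g0 (mem H) (fun g => index g s) g0H.
exists g => //; apply/forall_inP => h hH; apply/implyP => hg.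
have hg_le : index h s <= index g s by exact: g_max.
have [hs gs] : h \in s /\ g \in s by rewrite !s_edges !Hsub.
by rewrite ltn_neqAle hg_le andbT; apply: contra hg => /eqP /index_inj ->.
Qed.

Lemma last_of_unique g g' : g \in H -> g' \in H -> last_of H g s -> last_of H g' s -> g = g'.
Proof.
move=> gH g'H /forall_inP lg /forall_inP lg'; apply/eqP/negPn/negP => gg'.
have := lg' g gH; have := lg g' g'H; rewrite gg' eq_sym gg' /= => lt1 lt2.
by move: (ltn_trans lt1 lt2); rewrite ltnn.
Qed.

Section LastEdgeOf.
Variable g0 : {set T}.
Hypotheses (g0H : g0 \in H) (g0_last : last_of H g0 s).

Lemma prefix_edges_at v :
  [set f | (f \in take (index g0 s) s) && (v \in f)] =
  (edges_at H v :\ g0) :|: [set f in chords_at v | index f s < index g0 s].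
Proof.
(* Generalizing [edges e] keeps [inE] from unfolding it. *)
rewrite /chords_at /edges_at; move: (edges e) (Hsub) (s_edges) => E HE sE'.
apply/setP => f; rewrite !inE -sE'.
have [fs|fs] := boolP (f \in s); last first.
  have fH : f \notin H by apply: contra fs => /HE; rewrite sE'.
  by rewrite (negbTE fH) (contraNF (@mem_take _ _ _ _) fs) /= andbF.
rewrite in_take // andbC; case fH: (f \in H) => /=; last by rewrite andbF.
rewrite orbF andbC.
have [->|fg0] := eqVneq f g0; first by rewrite ltnn.
by move/forall_inP: g0_last => /(_ f fH); rewrite fg0 /= => ->.
Qed.

Lemma deg_prefix_lt2 v :
  (deg_in (take (index g0 s) s) v < 2) = (v \in g0) && precedes g0 (chords_at v) s.
Proof.
rewrite /deg_in prefix_edges_at cardsU.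
have -> : (edges_at H v :\ g0) :&: [set f in chords_at v | index f s < index g0 s] = set0.
  by apply/setP => f; rewrite !inE; case: (f \in H); rewrite ?andbF.
have Hv : #|edges_at H v :\ g0| = 2 - (v \in g0).
  by rewrite -(Hdeg v) (cardsD1 g0 (edges_at H v)) !inE g0H addKn.
rewrite cards0 subn0 Hv; case: (v \in g0) => /=; last by rewrite subn0 ltnNge leq_addr.
rewrite subn1 add1n !ltnS leqn0 cards_eq0; apply/eqP/forall_inP => [early f fch|late].
  rewrite ltnNge leq_eqVlt; apply/negP => /orP[/eqP eq_idx|lt].
    move: fch; rewrite in_setD in_set => /andP[/negP fH /andP[fE _]]; apply: fH.
    have [fs g0s] : f \in s /\ g0 \in s by rewrite !s_edges fE Hsub.
    by rewrite (index_inj f fs g0s eq_idx).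
  by move/setP: early => /(_ f); rewrite in_set in_set0 fch lt.
apply/setP => f; rewrite in_set in_set0; apply/negP => /andP[fch lt].
by move: (late f fch); rewrite ltnNge ltnW.
Qed.

Lemma ham_sub_G_omega :
  (H \subset G_omega s) = [exists v in g0, precedes g0 (chords_at v) s].
Proof.
have H_before h : h \in H -> index h s <= index g0 s.
  move=> hH; have [->//|hg0] := eqVneq h g0.
  by move/forall_inP: g0_last => /(_ h hH); rewrite hg0 => /ltnW.
have -> : (H \subset G_omega s) = (index g0 s < stop_index s).
  have inG f : f \in H -> (f \in G_omega s) = (index f s < stop_index s).
    by move=> fH; rewrite inE in_take // s_edges Hsub.
  apply/subsetP/idP => [sub | lt h hH]; first by rewrite -inG ?sub.
  by rewrite inG //; apply: leq_ltn_trans (H_before h hH) lt.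
rewrite /stop_index (@ltn_find_iota _ (index g0 s).+1).
- rewrite /mindeg2 negb_forall; apply: eq_existsb => v.
  by rewrite -ltnNge deg_prefix_lt2.
- move=> i j ij; apply/implyP => /forallP deg2; apply/forallP => v.
  apply: leq_trans (deg2 v) _; apply: subset_leq_card; apply/subsetP => f.
  by rewrite !inE -(take_takel s ij) => /andP[/mem_take -> ->].
- apply/forallP => v; rewrite /deg_in -(Hdeg v); apply: subset_leq_card.
  apply/subsetP => f; rewrite !inE => /andP[fH ->]; rewrite andbT.
  by rewrite in_take ?s_edges ?Hsub // ltnS H_before.
by rewrite ltnS index_mem s_edges Hsub.
Qed.

End LastEdgeOf.

Lemma incl_excl_ordering : H != set0 ->
  (H \subset G_omega s) + \sum_(g in H) (last_of H g s && precedes g (chords_near g) s) =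
  \sum_v \sum_(g in H | v \in g) (last_of H g s && precedes g (chords_at v) s).
Proof.
case/last_of_exists => g0 g0H g0_last.
(* Only g0 contributes to the sums; with g0 = {a, b} the identity reads
   [A || B] + [A && B] = A + B. *)
have lastE g : g \in H -> last_of H g s = (g == g0).
  move=> gH; apply/idP/eqP => [g_last|->//]; exact: last_of_unique.
have sum_last (P : pred {set T}) (F : {set T} -> bool) :
    \sum_(g in H | P g) (last_of H g s && F g) = P g0 && F g0.
  rewrite (eq_bigr (fun g => nat_of_bool ((g == g0) && F g))) => [|g /andP[gH _]]; last first.
    by rewrite lastE.
  case Pg0: (P g0); last by rewrite big1 // => g /andP[_]; case: eqVneq => // ->; rewrite Pg0.
  by rewrite (bigD1 g0) ?g0H ?Pg0 //= eqxx big1 ?addn0 // => g /andP[_ /negbTE->].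
rewrite (eq_bigl (fun g => (g \in H) && predT g)) => [|g]; last by rewrite andbT.
rewrite sum_last (eq_bigr (fun v => if v \in g0 then nat_of_bool (precedes g0 (chords_at v) s)
                                     else 0)) => [|v _]; last by rewrite sum_last; case: (v \in g0).
  rewrite (ham_sub_G_omega g0H g0_last) /chords_near precedes_bigcup -big_mkcond /=.
  have [a [b [ab ->]]] := edge_set2 (Hsub g0H).
  rewrite big_setU1 ?inE //= big_set1.
  set Pa := precedes _ (chords_at a) s; set Pb := precedes _ (chords_at b) s.
  have -> : [exists v in [set a; b], precedes [set a; b] (chords_at v) s] = Pa || Pb.
    by apply/exists_inP/orP => [[v /set2P[]-> Pv]|[Pa_|Pb_]]; [left|right|exists a|exists b];
      rewrite ?set21 ?set22.
  have -> : [forall v in [set a; b], precedes [set a; b] (chords_at v) s] = Pa && Pb.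
    apply/forall_inP/andP => [Pv|[Pa_ Pb_] v /set2P[]-> //].
    by split; apply: Pv; rewrite ?set21 ?set22.
  by case: Pa; case: Pb.
Qed.

End Ordering.

Lemma count_incl_excl : H != set0 ->
  count (fun s => H \subset G_omega s) (edge_orderings e) +
  \sum_(g in H) count (fun s => last_of H g s && precedes g (chords_near g) s)
                      (edge_orderings e) =
  \sum_v \sum_(g in H | v \in g)
     count (fun s => last_of H g s && precedes g (chords_at v) s) (edge_orderings e).
Proof.
move=> H0; under eq_bigr do rewrite count_sum; rewrite count_sum.
under [RHS]eq_bigr do under eq_bigr do rewrite count_sum.
under [RHS]eq_bigr do rewrite exchange_big /=.
rewrite [RHS]exchange_big [X in _ + X]exchange_big -big_split /=.
by apply: eq_big_seq => s sE; apply: incl_excl_ordering.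
Qed.

Lemma card_chords_at v : #|chords_at v| = d - 2.
Proof.
suff Hv : edges_at (edges e) v :&: H = edges_at H v.
  by rewrite /chords_at cardsD Hv Hdeg card_edges_at.
apply/setP => f; rewrite in_setI ![f \in edges_at _ _]inE.
by case fH: (f \in H); rewrite ?andbF ?andbT ?Hsub.
Qed.

Lemma card_chords_near g : g \in H -> #|chords_near g| = 2 * (d - 2).
Proof.
move=> gH; have [a [b [ab eg]]] := edge_set2 (Hsub gH).
rewrite /chords_near eg bigcup_setU !big_set1 cardsU !card_chords_at.
suff -> : chords_at a :&: chords_at b = set0 by rewrite cards0; lia.
apply/setP => f; rewrite in_setI in_set0 !in_setD ![f \in edges_at _ _]inE.
apply/negP => /andP[/and3P[fH fE af] /and3P[_ _ bf]].
by move: fH; rewrite (edge_setE fE af bf ab) -eg gH.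
Qed.

Lemma chords_at_sub v : chords_at v \subset edges e :\: H.
Proof.
by apply/subsetP => f; rewrite !in_setD [f \in edges_at _ _]inE => /andP[-> /andP[-> _]].
Qed.

Lemma chords_near_sub g : chords_near g \subset edges e :\: H.
Proof. by apply/bigcupsP => v _; apply: chords_at_sub. Qed.

Local Open Scope ring_scope.

Lemma count_last_precedes_edges g (B : {set {set T}}) : g \in H -> B \subset edges e :\: H ->
  (count (fun s => last_of H g s && precedes g B s) (edge_orderings e))%:R =
  (size (edge_orderings e))%:R / (#|H|%:R * 'C(#|H| + #|B|, #|H|)%:R) :> rat.
Proof.
move=> gH /subsetP BE; have uE := enum_uniq (edges e).
have HBE : {subset H :|: B <= enum (edges e)}.
  by move=> f; rewrite mem_enum inE => /orP[/Hsub //|/BE]; rewrite inE => /andP[].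
have dHB : [disjoint H & B].
  by apply/pred0P => f /=; apply/andP => -[fH /BE]; rewrite inE fH.
have nz : (#|H| * 'C(#|H| + #|B|, #|H|))%:R != 0 :> rat.
  by rewrite pnatr_eq0 muln_eq0 negb_or -!lt0n bin_gt0 leq_addr andbT; apply/card_gt0P; exists g.
rewrite /edge_orderings size_permutations // -(count_last_precedes uE HBE dHB gH).
by rewrite -natrM natrM mulfK.
Qed.

Let last_precedes_count k : rat :=
  (size (edge_orderings e))%:R / (#|T|%:R * 'C(#|T| + k, #|T|)%:R).

Lemma count_ham_sub_G_omega : (0 < #|T|)%N -> #|H| = #|T| ->
  (count (fun s => H \subset G_omega s) (edge_orderings e))%:R =
  (last_precedes_count (d - 2) *+ 2 - last_precedes_count (2 * (d - 2))) *+ #|T|.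
Proof.
move=> T0 HT; have H0 : H != set0 by rewrite -card_gt0 HT.
have cnt_near g : g \in H ->
    (count (fun s => last_of H g s && precedes g (chords_near g) s) (edge_orderings e))%:R
    = last_precedes_count (2 * (d - 2)).
  by move=> gH; rewrite count_last_precedes_edges ?chords_near_sub // card_chords_near // HT.
have cnt_at w g : g \in H ->
    (count (fun s => last_of H g s && precedes g (chords_at w) s) (edge_orderings e))%:R
    = last_precedes_count (d - 2).
  by move=> gH; rewrite count_last_precedes_edges ?chords_at_sub // card_chords_at // HT.
have /(congr1 (fun m => m%:R : rat)) := count_incl_excl H0.
rewrite natrD !natr_sum (eq_bigr _ cnt_near) sumr_const HT.
rewrite (eq_bigr (fun=> last_precedes_count (d - 2) *+ 2)) => [|w _]; last first.
  rewrite natr_sum (eq_bigl (fun g => g \in edges_at H w)) => [|g]; last by rewrite inE.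
  rewrite (eq_bigr (fun=> last_precedes_count (d - 2))) => [|g]; last first.
    by rewrite inE => /andP[/cnt_at].
  by rewrite sumr_const Hdeg.
rewrite (eq_bigl (fun w => w \in [set: T])) => [|w]; last by rewrite inE.
by rewrite sumr_const cardsT mulrnBl => /(canRL (addrK _)).
Qed.

Lemma ham_sub_G_omega_ratio : (0 < #|T|)%N -> #|H| = #|T| ->
  (count (fun s => H \subset G_omega s) (edge_orderings e))%:R /
    (size (edge_orderings e))%:R =
  2 / 'C(#|T| + d - 2, #|T|)%:R - 1 / 'C(#|T| + 2 * d - 4, #|T|)%:R :> rat.
Proof.
move=> T0 HT; rewrite count_ham_sub_G_omega // /last_precedes_count.
have [v _] := card_gt0P T0.
have d2 : (2 <= d)%N.
  rewrite -(Hdeg v) -(card_edges_at v); apply/subset_leq_card/subsetP => f.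
  by rewrite ![f \in edges_at _ _]inE => /andP[/Hsub -> ->].
have -> : (#|T| + d - 2 = #|T| + (d - 2))%N by lia.
have -> : (#|T| + 2 * d - 4 = #|T| + 2 * (d - 2))%N by lia.
set N : rat := (size (edge_orderings e))%:R; set n := #|T|.
have N0 : N != 0 by rewrite pnatr_eq0 size_permutations ?enum_uniq // -lt0n fact_gt0.
have n0 : n%:R != 0 :> rat by rewrite pnatr_eq0 -lt0n.
have C0 k : 'C(n + k, n)%:R != 0 :> rat by rewrite pnatr_eq0 -lt0n bin_gt0 leq_addr.
have [C1_0 C2_0] := (C0 (d - 2)%N, C0 (2 * (d - 2))%N).
by clearbody N n; field; rewrite N0 n0 C1_0 C2_0.
Qed.

End LastEdge.
End Graph.

Theorem corollary3 (T : finType) (e : rel T) (d : nat) :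
  symmetric e -> irreflexive e ->
  (forall v : T, #|[set w | e v w]| = d) ->
  3 <= #|T| ->
  0 < #|ham_cycles e| ->
  expected_ham_fraction e =
    (2 / ('C(#|T| + d - 2, #|T|))%:R - 1 / ('C(#|T| + 2 * d - 4, #|T|))%:R)%R.
Proof.
move=> e_sym e_irr e_reg T3 HC0; set r := (2 / _ - _)%R.
set N : rat := (size (edge_orderings e))%:R%R.
have N0 : N != 0%R by rewrite pnatr_eq0 size_permutations ?enum_uniq // -lt0n fact_gt0.
have count_ham H : H \in ham_cycles e ->
    (count (fun s => H \subset G_omega s) (edge_orderings e))%:R%R = (N * r)%R.
  rewrite inE => /(ham_cycle_2regular e_irr T3) [Hsub Hdeg HT].
  rewrite /r -(ham_sub_G_omega_ratio e_irr e_sym e_reg Hsub Hdeg _ HT); last lia.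
  by rewrite mulrC divfK.
rewrite /expected_ham_fraction /ham_fraction -mulr_suml -natr_sum sum_card_in_count.
rewrite natr_sum (eq_bigr _ count_ham) sumr_const -/N; clearbody N r; field.
by rewrite N0 pnatr_eq0 -lt0n HC0.
Qed.
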